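(* Let $\alpha=(\alpha_1,\dots,\alpha_k)$ be a composition of $n$ with $k$ parts. The number of Dyck paths of semilength $n$ with ascent composition $\alpha$ is \[\det\left[\binom{j-i+\sum_{\ell=1}^i\alpha_\ell}{j-(i-1)}\right]_{1\le i,j\le k-1}\] (the empty determinant, for $k=1$, being $1$).
   Context: A Dyck path of semilength $n$ is a word in $U,D$ with $n$ letters of each kind such that every prefix has at least as many $U$'s as $D$'s. Writing it uniquely as $U^{\alpha_1}D^{\delta_1}\cdots U^{\alpha_k}D^{\delta_k}$ with all exponents positive, its ascent composition is $(\alpha_1,\dots,\alpha_k)$. Binomial coefficients $\binom{N}{r}$ with $r<0$ are $0$. *)

From mathcomp Require Import all_boot all_order all_algebra.
Set Implicit Arguments. Unset Strict Implicit. Unset Printing Implicit Defensive.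
Import GRing.Theory.

(* A word in {U,D} is a seq bool, with true = U and false = D. *)

Definition prefix_ok (w : seq bool) : bool :=
  all (fun i => count_mem false (take i w) <= count_mem true (take i w))
      (iota 0 (size w).+1).

Definition dyck (n : nat) (w : seq bool) : bool :=
  [&& size w == 2 * n, count_mem true w == n & prefix_ok w].

Fixpoint asc_aux (cur : nat) (w : seq bool) : seq nat :=
  match w with
  | [::] => if 0 < cur then [:: cur] else [::]
  | true :: w' => asc_aux cur.+1 w'
  | false :: w' => if 0 < cur then cur :: asc_aux 0 w' else asc_aux 0 w'
  end.

(* ascent composition: for w = U^a1 D^d1 ... U^ak D^dk (exponents > 0)
   this is (a1, ..., ak) *)
Definition ascent_comp (w : seq bool) : seq nat := asc_aux 0 w.

Definition is_composition (n : nat) (alpha : seq nat) : bool :=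
  all (fun a => 0 < a) alpha && (sumn alpha == n).

Definition num_dyck_asc (n : nat) (alpha : seq nat) : nat :=
  #|[set w : (2 * n).-tuple bool | dyck n w && (ascent_comp w == alpha)]|.

(* The (k-1)x(k-1) matrix, k = size alpha, with 0-based indices i, j;
   1-based I = i+1, J = j+1: entry C(J - I + sum_{l<=I} alpha_l, J - (I-1)),
   zero when J - (I-1) < 0. Note sum_{l<=I} alpha_l >= I for compositions,
   so the top index is a genuine natural number. *)
Definition asc_matrix (alpha : seq nat) : 'M[int]_((size alpha).-1) :=
  \matrix_(i, j)
    (if i <= j.+1 then
       Posz ('C(j + sumn (take i.+1 alpha) - i, j.+1 - i))
     else 0%R).

From mathcomp Require Import all_boot all_order all_algebra.
From mathcomp Require Import zify.
Set Implicit Arguments.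
Unset Strict Implicit.
Unset Printing Implicit Defensive.
Import GRing.Theory.

(* A Dyck path with ascent composition (a_1, ..., a_k) is determined by its
   descent lengths.  Writing v_i for the number of down steps before the
   (i+1)-th ascent run, the path stays above the axis iff
   1 <= v_1 < ... < v_(k-1) with v_i <= b_i := a_1 + ... + a_i, so the paths
   are counted by the strictly increasing sequences under the nondecreasing
   bounds b_i.  Let f_m be the number of such sequences of length m and
   h_r(x) = C(x + r - 1, r) the number of multisets of size r from x
   elements.  Moving the largest entry between a strictly increasing
   sequence under b_1, ..., b_i and a multiset bounded by b_(i+1) is a
   sign-reversing involution, whence sum_(i <= J) (-1)^i f_i h_(J-i)(b_(i+1))
   = 0 for J > 0 (here it is proved by induction on a cap on all entries).
   The matrix of the statement is upper Hessenberg with unit subdiagonal, and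
   these relations say that ((-1)^i f_i)_i is a left null vector of it except
   in the last column; this pins its determinant down to f_(k-1). *)

(* [incr_below lo bs] counts the sequences lo <= v_1 < ... < v_k with
   v_i <= bs_i, where k = size bs. *)
Fixpoint incr_below (lo : nat) (bs : seq nat) : nat :=
  if bs is b :: bs' then \sum_(lo <= v < b.+1) incr_below v.+1 bs' else 1.

Lemma incr_below_shift lo bs : incr_below lo.+1 (map S bs) = incr_below lo bs.
Proof.
elim: bs lo => [|b bs IH] lo //=.
rewrite -addn1 big_addn subn1 /=.
by apply: eq_bigr => v _; rewrite addn1 IH.
Qed.

Lemma incr_below_gt lo b bs : b < lo -> incr_below lo (b :: bs) = 0.
Proof. by move=> blo; rewrite /= big_geq. Qed.

(* Split according to whether the last entry equals [t.+1]. *)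
Lemma incr_below_minS lo t bs x :
  incr_below lo (map (minn t.+1) (rcons bs x)) =
  incr_below lo (map (minn t) (rcons bs x)) +
  (if (t < x) && (lo <= t.+1) then incr_below lo (map (minn t) bs) else 0).
Proof.
elim: bs lo => [|y bs IH] lo /=.
  rewrite !sum_nat_const_nat !muln1.
  by case: (ltnP t x); case: (leqP lo t.+1) => /=; lia.
under eq_bigr do rewrite IH.
rewrite big_split /=.
have capped v : t < v -> incr_below v (map (minn t) (rcons bs x)) = 0.
  by move=> tv; case: bs {IH} => [|z bs]; apply: incr_below_gt; lia.
have last_term m : m <= t.+1 ->
    \sum_(lo <= v < m) (if (t < x) && (v < t.+1) then
                          incr_below v.+1 (map (minn t) bs) else 0) =
    if t < x then \sum_(lo <= v < m) incr_below v.+1 (map (minn t) bs) else 0.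
  move=> mt; case: (ltnP t x) => tx /=; last by rewrite big1.
  by apply: eq_big_nat => v /andP [_ vm]; rewrite ifT //; lia.
case: (leqP y t) => yt.
  have -> : minn t.+1 y = y by lia.
  rewrite last_term; last lia.
  case: (ltnP t x) => tx //=; case: leqP => lot //.
  by rewrite !big_geq //; lia.
have -> : minn t.+1 y = t.+1 by lia.
case: (leqP lo t.+1) => lot; last by rewrite !big_geq ?andbF //; lia.
rewrite !(big_nat_recr t.+1) //= capped // ltnn andbF !addn0 andbT.
by rewrite last_term.
Qed.

Fixpoint partial_sums (x : nat) (s : seq nat) : seq nat :=
  if s is a :: s' then x :: partial_sums (x + a) s' else [::].

Lemma partial_sumsS x s : partial_sums x.+1 s = map S (partial_sums x s).
Proof. by elim: s x => [|a s IH] x //=; rewrite addSn IH. Qed.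

Lemma partial_sumsE x s :
  partial_sums x s = mkseq (fun p => x + sumn (take p s)) (size s).
Proof.
elim: s x => [|a s IH] x //=.
rewrite IH /mkseq -[iota 0 (size s).+1]/(0 :: iota (1 + 0) (size s)) iotaDl.
rewrite /= addn0 -map_comp; congr (_ :: _).
by apply: eq_map => p /=; rewrite addnA.
Qed.

Fixpoint nonneg_walk (h : nat) (w : seq bool) : bool :=
  match w with
  | [::] => true
  | true :: w' => nonneg_walk h.+1 w'
  | false :: w' => (0 < h) && nonneg_walk h.-1 w'
  end.

Lemma prefix_counts_nonneg_walk h w :
  all (fun i => count_mem false (take i w) <= h + count_mem true (take i w))
      (iota 0 (size w).+1) = nonneg_walk h w.
Proof.
elim: w h => [|b w IH] h; first by [].
rewrite -[iota 0 _]/(0 :: iota (1 + 0) (size w).+1) iotaDl.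
have I0 : 0 \in iota 0 (size w).+1 by [].
move: (iota 0 _) I0 IH => I I0 IH /=; rewrite all_map.
case: b; case: h => [|h] /=; last 2 first.
- by apply: negbTE; apply/allPn; exists 0 => //=; rewrite take0.
all: rewrite -IH; apply: eq_all => i /=.
all: by rewrite !(add0n, add1n, addSn, addnS).
Qed.

Lemma prefix_okE w : prefix_ok w = nonneg_walk 0 w.
Proof. by rewrite -prefix_counts_nonneg_walk. Qed.

Fixpoint words (L : nat) : seq (seq bool) :=
  if L is L'.+1 then map (cons true) (words L') ++ map (cons false) (words L')
  else [:: [::]].

Lemma cons_inj T (x : T) : injective (cons x).
Proof. by move=> u v []. Qed.

Lemma mem_words L w : (w \in words L) = (size w == L).
Proof.
elim: L w => [|L IH] [|b w] //=; rewrite mem_cat.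
  by apply/negbTE; rewrite negb_or; apply/andP; split; apply/mapP => -[].
rewrite eqSS -IH; case: b; rewrite (mem_map (@cons_inj _ _)).
  by apply/orb_idr => /mapP [].
by apply/orb_idl => /mapP [].
Qed.

Lemma uniq_words L : uniq (words L).
Proof.
elim: L => [|L IH] //=.
rewrite cat_uniq !(map_inj_uniq (@cons_inj _ _)) IH andbT /=.
by apply/hasPn => _ /mapP [w _ ->]; apply/mapP => -[].
Qed.

Lemma card_bool_tuples (P : pred (seq bool)) L :
  #|[set t : L.-tuple bool | P t]| = count P (words L).
Proof.
rewrite cardE /enum_mem size_filter (eq_count (a2 := preim val P)); last first.
  by move=> t; rewrite /= inE.
rewrite -count_map; apply/permP/uniq_perm.
- by rewrite (map_inj_uniq val_inj) -?enumT ?enum_uniq.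
- exact: uniq_words.
move=> w; rewrite mem_words; apply/mapP/eqP => [[t _ ->]|wL].
  exact: size_tuple.
by exists (Tuple (introT eqP wL)); rewrite ?mem_enum.
Qed.

(* [w] completes a prefix that ends at height [h] after an ascent run of
   length [c] (c = 0: after a down step) into a Dyck path whose remaining
   ascent composition is [al], the current run counting towards [head al]. *)
Definition dyck_suffix (h c : nat) (al : seq nat) (w : seq bool) : bool :=
  [&& nonneg_walk h w, h + count_mem true w == count_mem false w
    & asc_aux c w == al].

(* The counted sequences list, for each remaining ascent run except the
   current one, the number of down steps of [w] before it. *)
Definition dyck_suffix_count (h c : nat) (al : seq nat) : nat :=
  if c == 0 then incr_below 0 (partial_sums h al)
  else if al is a :: al' then
    (if c <= a then incr_below 1 (partial_sums (h + a - c) al') else 0)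
  else 0.

Lemma dyck_suffix_up h c al w :
  dyck_suffix h c al (true :: w) = dyck_suffix h.+1 c.+1 al w.
Proof. by rewrite /dyck_suffix /= add0n addnS addSn. Qed.

Lemma dyck_suffix_down h c al w :
  dyck_suffix h c al (false :: w) =
  if h is h'.+1 then
    (if c == 0 then dyck_suffix h' 0 al w
     else if al is a :: al' then (a == c) && dyck_suffix h' 0 al' w else false)
  else false.
Proof.
rewrite /dyck_suffix /= add0n add1n; case: h => [|h] //=.
rewrite addSn eqSS; case: c => [|c] //=.
case: al => [|a al]; first by rewrite (_ : (_ :: _ == [::]) = false) ?andbF.
by rewrite eqseq_cons [c.+1 == a]eq_sym; case: (a == c.+1); rewrite ?andbF.
Qed.

Lemma dyck_suffix_count_step h c al :
  all (fun a => 0 < a) al -> 2 * c < h + 2 * sumn al ->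
  dyck_suffix_count h c al =
  dyck_suffix_count h.+1 c.+1 al +
  (if h is h'.+1 then
     (if c == 0 then dyck_suffix_count h' 0 al
      else if al is a :: al' then
        (if a == c then dyck_suffix_count h' 0 al' else 0)
      else 0)
   else 0).
Proof.
rewrite /dyck_suffix_count /=; case: al => [|a al] /=.
  by case: h => [|h] _ //=; rewrite addn0 ltnNge leq_addl.
move=> /andP [a_pos _]; case: c => [|c] len /=.
  rewrite a_pos addSn subn1 big_ltn //; congr (_ + _).
  case: h {len} => [|h]; first by rewrite big_geq.
  by rewrite addSn partial_sumsS; exact: (incr_below_shift 0 (h :: _)).
case: (ltngtP a c.+1) len => [ac|ca|<-] len.
- by case: h {len}.
- by rewrite addSn subSS; case: h {len} => [|h]; rewrite ?addn0.
rewrite addnK add0n; case: h len => [|h] len.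
  case: al len => [|a2 al] len; last exact: incr_below_gt.
  by rewrite /= addn0 ltnn in len.
by rewrite partial_sumsS incr_below_shift.
Qed.

Lemma count_dyck_suffix L h c al :
  all (fun a => 0 < a) al -> L + 2 * c = h + 2 * sumn al ->
  count (dyck_suffix h c al) (words L) = dyck_suffix_count h c al.
Proof.
elim: L h c al => [|L IH] h c al al_pos len.
  rewrite /= /dyck_suffix /= !addn0.
  case: c len => [|c] len.
    have -> : h = 0 by lia.
    case: al al_pos len => [|a al] /= al_pos len; first by [].
    by move: al_pos => /andP [a_pos _]; lia.
  case: al al_pos len => [|a al] /= al_pos len; first by case: (h == 0).
  case: (leqP c.+1 a) => ca; last first.
    rewrite eqseq_cons [c.+1 == a]gtn_eqF // andbF.
    by rewrite /dyck_suffix_count /= leqNgt ca.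
  case: al al_pos len => [|a2 al] /= al_pos len; last first.
    by move: al_pos => /andP [? /andP [? _]]; lia.
  have [-> ->] : h = 0 /\ a = c.+1 by lia.
  by rewrite /dyck_suffix_count /= eqxx ltnSn.
have up : count (preim (cons true) (dyck_suffix h c al)) (words L) =
          count (dyck_suffix h.+1 c.+1 al) (words L).
  by apply: eq_count => w; exact: dyck_suffix_up.
rewrite /= count_cat !count_map up IH //; last lia.
rewrite [RHS](dyck_suffix_count_step al_pos); last lia.
congr (_ + _).
rewrite (@eq_count _ _ (fun w => dyck_suffix h c al (false :: w))) //.
under eq_count do rewrite dyck_suffix_down.
case: h {up} len => [|h] len; first exact: count_pred0.
case: c len => [|c] len /=; first by rewrite IH //; lia.
case: al al_pos len => [|a al] /= al_pos len; first exact: count_pred0.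
case: eqP => [ac|_]; last exact: count_pred0.
by move: al_pos => /andP [_ al_pos]; rewrite IH //; lia.
Qed.

Lemma num_dyck_asc_incr_below n a al : is_composition n (a :: al) ->
  num_dyck_asc n (a :: al) = incr_below 1 (partial_sums a al).
Proof.
move=> /andP [al_pos /eqP al_sum].
rewrite /num_dyck_asc.
rewrite (card_bool_tuples (fun w => dyck n w && (ascent_comp w == a :: al))).
rewrite (eq_in_count (a2 := dyck_suffix 0 0 (a :: al))); last first.
  move=> w; rewrite mem_words => /eqP w_size.
  have U_D : count_mem true w + count_mem false w = 2 * n.
    rewrite -w_size -(count_predC (pred1 true)); congr (_ + _).
    by apply: eq_count => -[].
  rewrite /dyck /dyck_suffix /ascent_comp prefix_okE w_size eqxx add0n /=.
  have -> : (count_mem true w == n) = (count_mem true w == count_mem false w).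
    by apply/eqP/eqP; lia.
  by rewrite -andbA andbCA.
rewrite count_dyck_suffix //; last by rewrite al_sum addn0.
by rewrite /dyck_suffix_count /= big_nat1.
Qed.

Section Hessenberg.

Local Open Scope ring_scope.

(* Multiplying [A] on the left by the identity with its first row replaced
   by [w] leaves the determinant unchanged and turns the first row into a
   multiple of the last unit vector; the complementary minor is
   unitriangular. *)
Lemma det_hessenberg (R : comPzRingType) m (A : 'M[R]_m.+1) (w : 'rV[R]_m.+1) :
  (forall i j : 'I_m.+1, (j.+1 < i)%N -> A i j = 0) ->
  (forall i j : 'I_m.+1, i = j.+1 :> nat -> A i j = 1) ->
  w ord0 ord0 = 1 -> (forall j, j != ord_max -> (w *m A) ord0 j = 0) ->
  \det A = (-1) ^+ m * (w *m A) ord0 ord_max.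
Proof.
move=> A_hess A_subdiag w0 wA_eq0.
pose W := \matrix_(i, j) if i == ord0 then w ord0 j else (i == j)%:R.
have detW : \det W = 1.
  rewrite -det_tr det_trig; last first.
    apply/is_trig_mxP => i j ij; rewrite !mxE.
    have j0 : j != ord0 by rewrite -val_eqE /= -lt0n (leq_ltn_trans _ ij).
    have ji : j != i by rewrite -val_eqE /= gtn_eqF.
    by rewrite (negbTE j0) (negbTE ji).
  rewrite big1 // => i _; rewrite !mxE eqxx.
  by case: eqP => [->|].
have WA0 j : (W *m A) ord0 j = (w *m A) ord0 j.
  by rewrite !mxE; apply: eq_bigr => k _; rewrite mxE eqxx.
have WA i j : i != ord0 -> (W *m A) i j = A i j.
  move=> i0; rewrite mxE (bigD1 i) //= big1 => [|k ki].
    by rewrite !mxE (negbTE i0) eqxx mul1r addr0.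
  rewrite !mxE (negbTE i0).
  by rewrite eq_sym (negbTE ki) mul0r.
have minor1 : \det (row' ord0 (col' ord_max (W *m A))) = 1.
  rewrite -det_tr det_trig; last first.
    apply/is_trig_mxP => i j ij; rewrite 3!mxE WA ?A_hess //.
    by rewrite lift_max lift0.
  rewrite big1 // => i _; rewrite 3!mxE WA ?A_subdiag //.
  by rewrite lift_max lift0.
have -> : \det A = \det (W *m A) by rewrite det_mulmx detW mul1r.
rewrite (expand_det_row _ ord0) (bigD1 ord_max) //= big1 => [|j /wA_eq0 wAj].
  by rewrite addr0 WA0 mulrC /cofactor minor1 mulr1.
by rewrite WA0 wAj mul0r.
Qed.

End Hessenberg.

Definition multichoose (x r : nat) : nat := 'C(x + r - 1, r).

Lemma multichoose0 x : multichoose x 0 = 1.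
Proof. exact: bin0. Qed.

Lemma multichoose0S r : multichoose 0 r.+1 = 0.
Proof. by rewrite /multichoose add0n subn1 bin_small. Qed.

Lemma multichooseSS x r :
  multichoose x.+1 r.+1 = multichoose x.+1 r + multichoose x r.+1.
Proof. by rewrite /multichoose addSn !subn1 /= addnS binS addnC. Qed.

Section NondecreasingBounds.

Variable b : nat -> nat.
Hypothesis b_nondecr : {homo b : i j / i <= j}.

Definition trunc_count t i := incr_below 1 (map (minn t) (mkseq b i)).

Lemma trunc_count0 t : trunc_count t 0 = 1.
Proof. by []. Qed.

Lemma trunc_count0S i : trunc_count 0 i.+1 = 0.
Proof. by rewrite /trunc_count /= min0n big_geq. Qed.

Lemma trunc_countSS t i :
  trunc_count t.+1 i.+1 =
  trunc_count t i.+1 + (if t < b i then trunc_count t i else 0).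
Proof. by rewrite /trunc_count mkseqS incr_below_minS andbT. Qed.

Local Open Scope ring_scope.

Definition alt_term J t i : int :=
  (-1) ^+ i * (trunc_count t i)%:Z * (multichoose (minn t (b i)) (J - i))%:Z.

(* Up to sign, the pairs whose strict part has length [i] and ends with the
   new value [t.+1]; moving that entry into the multiset matches them with
   pairs whose strict part has length [i - 1]. *)
Definition boundary_term J t i : int :=
  if i is i'.+1 then
    (if (i' < J)%N && (t < b i')%N then
       (-1) ^+ i' * (trunc_count t i')%:Z * (multichoose t.+1 (J - i))%:Z
     else 0)
  else 0.

Lemma alt_termS J t i : (i <= J)%N ->
  alt_term J t.+1 i =
  alt_term J t i + (boundary_term J t i.+1 - boundary_term J t i).
Proof.
move=> iJ.
have multichoose_step : (multichoose (minn t.+1 (b i)) (J - i))%:Z =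
    (multichoose (minn t (b i)) (J - i))%:Z +
    (if (i < J)%N && (t < b i)%N then (multichoose t.+1 (J - i.+1))%:Z else 0).
  case: (ltnP t (b i)) => tb; last first.
    by rewrite !(minn_idPr _) ?andbF ?addr0 // ltnW.
  rewrite (minn_idPl tb) andbT.
  case: (ltnP i J) => iJ'; last first.
    by rewrite (_ : J - i = 0)%N ?multichoose0 ?addr0 //; lia.
  by rewrite -(subnSK iJ') multichooseSS PoszD addrC.
rewrite /alt_term /boundary_term.
case: i iJ multichoose_step => [|i] iJ multichoose_step.
  by rewrite !trunc_count0 expr0 !mul1r multichoose_step subr0.
rewrite trunc_countSS PoszD mulrDr mulrDl {1}multichoose_step mulrDr -addrA.
congr (_ + _); congr (_ + _); first by case: ifP; rewrite ?mulr0.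
rewrite iJ.
case: (ltnP t (b i)) => tb; last by rewrite !mulr0 oppr0.
rewrite (minn_idPl _); last exact: leq_trans tb (b_nondecr (leqnSn i)).
by rewrite exprS mulN1r !mulNr.
Qed.

Lemma alt_sum_trunc J t : (0 < J)%N -> \sum_(i < J.+1) alt_term J t i = 0.
Proof.
move=> J_gt0; elim: t => [|t IH].
  rewrite big_ord_recl big1 => [|i _]; rewrite /alt_term; last first.
    by rewrite trunc_count0S mulr0 mul0r.
  by rewrite min0n; case: J J_gt0 => // J _; rewrite multichoose0S mulr0 addr0.
rewrite (eq_bigr _ (fun (i : 'I_J.+1) _ => alt_termS t (leq_ord i))).
rewrite big_split /= IH add0r.
rewrite -(big_mkord xpredT
  (fun i => boundary_term J t i.+1 - boundary_term J t i)).
by rewrite telescope_sumr //= ltnn andFb subr0.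
Qed.

Definition signed_count i : int := (-1) ^+ i * (incr_below 1 (mkseq b i))%:Z.

Lemma alt_sum J : (0 < J)%N ->
  \sum_(i < J.+1) signed_count i * (multichoose (b i) (J - i))%:Z = 0.
Proof.
move=> J_gt0; rewrite -[RHS](alt_sum_trunc (b J) J_gt0); apply: eq_bigr => i _.
have bounded p : (p <= i)%N -> minn (b J) (b p) = b p.
  by move=> pi; apply/minn_idPr/b_nondecr; rewrite (leq_trans pi) // -ltnS.
rewrite /alt_term /trunc_count bounded //; congr (_ * (incr_below 1 _)%:Z * _).
rewrite /mkseq -map_comp; apply/eq_in_map => p.
by rewrite mem_iota => /andP [_ pi] /=; rewrite bounded // ltnW.
Qed.

Definition bounds_matrix m : 'M[int]_m :=
  \matrix_(i, j) if (i <= j.+1)%N then (multichoose (b i) (j.+1 - i))%:Z else 0.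

Lemma det_bounds_matrix m :
  \det (bounds_matrix m) = (incr_below 1 (mkseq b m))%:Z.
Proof.
case: m => [|m]; first by rewrite det_mx00.
pose g J i := signed_count i * (multichoose (b i) (J - i))%:Z.
have wA j : (\row_i signed_count i *m bounds_matrix m.+1) ord0 j =
            \sum_(i < m.+1 | (i <= j.+1)%N) g j.+1 i.
  rewrite mxE [RHS]big_mkcond; apply: eq_bigr => i _; rewrite !mxE.
  by case: ifP; rewrite ?mulr0.
rewrite (det_hessenberg (w := \row_i signed_count i)).
- rewrite wA (eq_bigl xpredT) => [|i]; last by rewrite ltnW.
  have /eqP := alt_sum (ltn0Sn m).
  rewrite big_ord_recr /= subnn multichoose0 mulr1 addr_eq0 => /eqP ->.
  by rewrite /signed_count exprS mulN1r !mulNr opprK signrMK.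
- by move=> i j ji; rewrite mxE ifN // -ltnNge.
- by move=> i j ij; rewrite mxE ij leqnn subnn multichoose0.
- by rewrite mxE.
move=> j j_max; rewrite wA -[RHS](alt_sum (ltn0Sn j)).
have jm : (j < m)%N by rewrite ltn_neqAle -ltnS ltn_ord andbT.
by rewrite (@big_ord_widen_cond _ _ _ j.+2 m.+1 xpredT (g j.+1)).
Qed.

End NondecreasingBounds.

Lemma leq_sumn_take s i j : i <= j -> sumn (take i s) <= sumn (take j s).
Proof.
move=> ij; rewrite -(take_takel s ij) -[X in _ <= sumn X](cat_take_drop i).
by rewrite sumn_cat leq_addr.
Qed.

Theorem lemma4p8 (n : nat) (alpha : seq nat) :
  is_composition n alpha -> 0 < size alpha ->
  Posz (num_dyck_asc n alpha) = (\det (asc_matrix alpha))%R.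
Proof.
case: alpha => [|a al] // comp _.
pose b p := sumn (take p.+1 (a :: al)).
have b_nondecr : {homo b : i j / i <= j} by move=> i j ij; exact: leq_sumn_take.
have -> : asc_matrix (a :: al) = bounds_matrix b (size al).
  apply/matrixP => i j; rewrite !mxE; case: ifP => // ij.
  rewrite /multichoose /b; congr (Posz (binomial _ _)); move: ij.
  by set s := sumn _; move: (nat_of_ord i) (nat_of_ord j) => x y; lia.
by rewrite det_bounds_matrix // num_dyck_asc_incr_below // partial_sumsE.
Qed.
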